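(* Assume Assumption A. Let $\{\mathscr F_1,\dots,\mathscr F_{\mathfrak p},\Delta_{\mathscr F}\}$, $\mathfrak p\ge2$, be a partition of $E$ and $\beta^-_N,\beta_N$ positive sequences with $\beta^-_N/\beta_N\to0$ satisfying (H0)–(H3) with $(a_N,b_N)=(\beta^-_N,\beta_N)$; let $X_{\mathscr F}$ be the Markov chain on $P=\{1,\dots,\mathfrak p\}$ with rates $r_{\mathscr F}(x,y)$ given by (H1). Let $C$ be a communicating class of $X_{\mathscr F}$ and $\mathscr C=\bigcup_{x\in C}\mathscr F_x$. Then for all $\eta\ne\xi\in\mathscr C$ there exists $m(\eta,\xi)\in(0,\infty)$ with $\lim_{N\to\infty}\mu_N(\eta)/\mu_N(\xi)=m(\eta,\xi)$.
   Context: Setting: $E$ is a fixed finite set. For each $N\ge1$, $(\eta^N_t)$ is a continuous-time irreducible Markov chain on $E$ with jump rates $R_N(\eta,\xi)$, holding rates $\lambda_N(\eta)=\sum_{\xi\neq\eta}R_N(\eta,\xi)$ and unique invariant probability $\mu_N$; $\mathbb P_\eta,\mathbb E_\eta$ law/expectation from $\eta$. $H_A=\inf\{t>0:\eta^N_t\in A\}$, $H^+_A=\inf\{t>\tau_1:\eta^N_t\in A\}$, $\tau_1$ first jump time; $\mathrm{Cap}_N(A,B)=\sum_{\eta\in A}\mu_N(\eta)\lambda_N(\eta)\mathbb P_\eta[H_B<H^+_A]$, $\mathrm{Cap}_N(\eta,\xi)=\mathrm{Cap}_N(\{\eta\},\{\xi\})$. The trace on nonempty $F\subset E$ is $\eta^F_t=\eta^N_{S_F(t)}$,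 $S_F(t)=\sup\{s:\int_0^s\mathbf 1\{\eta^N_r\in F\}dr\le t\}$, with jump rates $R^F_N$. Ordered families: a finite family of sequences of positive reals $(a^r_N)$, $r\in\mathfrak R$, is ordered if for all $r\neq s$, $\arctan(a^r_N/a^s_N)$ converges. Assumption A: (i) for each $\eta\neq\xi$, either $R_N(\eta,\xi)=0$ for all $N$ or $>0$ for all $N$; $\mathbb B$ is the set of pairs with positive rates; (ii) for every $m\ge1$ the family $\prod_{(\eta,\xi)\in\mathbb B}R_N(\eta,\xi)^{k(\eta,\xi)}$, $k:\mathbb B\to\mathbb Z_+$, $\sum k=m$, is ordered. Conditions for a partition $\{\mathscr F_1,\dots,\mathscr F_{\mathfrak p},\Delta_{\mathscr F}\}$ (independent of $N$) and $(a_N,b_N)$, with $\mathscr F=\bigcup_x\mathscr F_x$ and $r^{\mathscr F}_N(\mathscr F_x,\mathscr F_y)=\mu_N(\mathscr F_x)^{-1}\sum_{\eta\in\mathscr F_x}\mu_N(\eta)\sum_{\xi\in\mathscr F_y}R^{\mathscr F}_N(\eta,\xi)$: (H0) for each $x$, $\eta\in\mathscr F_x$, $\lim_N\mu_N(\eta)/\mu_N(\mathscr F_x)\in(0,1]$ exists; (H1) for $x\ne y$, $r_{\mathscr F}(x,y):=\lim_Nb_Nr^{\mathscr F}_N(\mathscr F_x,\mathscr F_y)\in[0,\infty)$ exists, and $\sum_x\sum_{y\ne x}r_{\mathscr F}(x,y)>0$; (H2) for $|\mathscr F_x|\ge2$, $\eta\ne\xi\in\mathscr F_x$: $\liminf_Na_N\mathrm{Cap}_N(\eta,\xi)/\mu_N(\mathscr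 F_x)>0$; (H3) for every $t>0$, $\lim_N\max_\eta\mathbb E_\eta[\int_0^t\mathbf 1\{\eta^N_{sb_N}\in\Delta_{\mathscr F}\}ds]=0$. *)

From Stdlib Require Import Reals Relations ClassicalEpsilon.
From mathcomp Require Import all_boot.

Set Implicit Arguments.
Unset Strict Implicit.
Unset Printing Implicit Defensive.

Local Open Scope R_scope.

(** Total "limit" of a real sequence (its limit when it converges). *)
Definition seqlim (u : nat -> R) : R :=
  epsilon (inhabits 0) (fun l => Un_cv u l).

(** Total Riemann integral (its value when f is Riemann integrable on [a,b]). *)
Definition RInt (f : R -> R) (a b : R) : R :=
  epsilon (inhabits 0)
    (fun I => exists pr : Riemann_integrable f a b, RiemannInt pr = I).

Section Chain.
Variable E : finType.

(** A rate function (for one fixed N): Rt η ξ is the jump rate η -> ξ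
    (diagonal entries are ignored). *)

Definition holding (Rt : E -> E -> R) (eta : E) : R :=
  \big[Rplus/0]_(xi | xi != eta) Rt eta xi.

Definition jumpP (Rt : E -> E -> R) (eta xi : E) : R :=
  if eta == xi then 0 else Rt eta xi / holding Rt eta.

(** firstHitUpTo Rt S T k ζ = probability, for the jump chain started at ζ,
    that during jump steps 1..k it visits S, and that its first visit to S
    (at a step >= 1) lies in T. *)
Fixpoint firstHitUpTo (Rt : E -> E -> R) (S T : {set E}) (k : nat) (z : E) : R :=
  match k with
  | O => 0
  | k'.+1 => \big[Rplus/0]_(z' : E)
               (jumpP Rt z z' *
                (if z' \in S then (if z' \in T then 1 else 0)
                 else firstHitUpTo Rt S T k' z'))
  end.

(** P_ζ[ the first visit (after the first jump) to S happens in T ] *)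
Definition firstHit (Rt : E -> E -> R) (S T : {set E}) (z : E) : R :=
  seqlim (fun k => firstHitUpTo Rt S T k z).

(** P_η[H_B < H^+_A]  (A, B disjoint) *)
Definition hitBefore (Rt : E -> E -> R) (A B : {set E}) (eta : E) : R :=
  firstHit Rt (A :|: B) (B :\: A) eta.

Definition muS (m : E -> R) (A : {set E}) : R := \big[Rplus/0]_(eta in A) m eta.

Definition Cap (Rt : E -> E -> R) (m : E -> R) (A B : {set E}) : R :=
  \big[Rplus/0]_(eta in A) (m eta * holding Rt eta * hitBefore Rt A B eta).

Definition Cap2 (Rt : E -> E -> R) (m : E -> R) (eta xi : E) : R :=
  Cap Rt m [set eta] [set xi].

(** jump rates of the trace process on F: R^F(η,ξ) = λ(η) P_η[H^+_F = H_ξ] *)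
Definition traceRate (Rt : E -> E -> R) (F : {set E}) (eta xi : E) : R :=
  holding Rt eta * firstHit Rt F [set xi] eta.

Definition traceSetRate (Rt : E -> E -> R) (m : E -> R) (F Fx Fy : {set E}) : R :=
  / muS m Fx *
  \big[Rplus/0]_(eta in Fx) (m eta * \big[Rplus/0]_(xi in Fy) traceRate Rt F eta xi).

Definition irreducible (Rt : E -> E -> R) : Prop :=
  forall eta xi : E,
    clos_refl_trans E (fun a b => a <> b /\ 0 < Rt a b) eta xi.

Definition invariantProb (Rt : E -> E -> R) (m : E -> R) : Prop :=
  (forall eta, 0 <= m eta) /\
  \big[Rplus/0]_(eta : E) m eta = 1 /\
  (forall xi, \big[Rplus/0]_(eta | eta != xi) (m eta * Rt eta xi)
              = m xi * holding Rt xi).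

Definition generator (Rt : E -> E -> R) (eta xi : E) : R :=
  if eta == xi then - holding Rt eta else Rt eta xi.

Definition mmul (A B : E -> E -> R) (eta zeta : E) : R :=
  \big[Rplus/0]_(xi : E) (A eta xi * B xi zeta).

Fixpoint mpow (A : E -> E -> R) (k : nat) : E -> E -> R :=
  match k with
  | O => fun eta zeta => if eta == zeta then 1 else 0
  | k'.+1 => mmul A (mpow A k')
  end.

(** transition probabilities p_t(η,ζ) = P_η[η_t = ζ] = (e^{tQ})(η,ζ) *)
Definition transP (Rt : E -> E -> R) (t : R) (eta zeta : E) : R :=
  seqlim (fun n => \big[Rplus/0]_(k < n)
                      (t ^ k / INR (Factorial.fact k) * mpow (generator Rt) k eta zeta)).

(** E_η[ ∫_0^t 1{η_{s b} ∈ D} ds ] = ∫_0^t P_η[η_{s b} ∈ D] ds *)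
Definition occTime (Rt : E -> E -> R) (D : {set E}) (b t : R) (eta : E) : R :=
  RInt (fun s => \big[Rplus/0]_(zeta in D) transP Rt (s * b) eta zeta) 0 t.

Definition orderedPair (a c : nat -> R) : Prop :=
  exists l, Un_cv (fun N => atan (a N / c N)) l.

Definition monomial (Rs : nat -> E -> E -> R) (B : {set E * E}) (k : E * E -> nat)
  (N : nat) : R :=
  \big[Rmult/1]_(pr in B) (Rs N pr.1 pr.2 ^ k pr).

Definition assumptionA (Rs : nat -> E -> E -> R) (B : {set E * E}) : Prop :=
  (forall eta xi : E, eta <> xi ->
     (forall N, Rs N eta xi = 0) \/ (forall N, 0 < Rs N eta xi)) /\
  (forall eta xi : E, (eta, xi) \in B <-> (eta <> xi /\ forall N, 0 < Rs N eta xi)) /\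
  (forall m : nat, (1 <= m)%nat ->
     forall k1 k2 : E * E -> nat,
       (\sum_(pr in B) k1 pr)%N = m -> (\sum_(pr in B) k2 pr)%N = m ->
       orderedPair (monomial Rs B k1) (monomial Rs B k2)).

Definition isPartition (p : nat) (F : 'I_p -> {set E}) (D : {set E}) : Prop :=
  (forall x, F x != set0) /\
  (forall x y, x != y -> [disjoint F x & F y]) /\
  (forall x, [disjoint F x & D]) /\
  (forall eta : E, eta \in D \/ exists x, eta \in F x).

Definition unionF (p : nat) (F : 'I_p -> {set E}) : {set E} := \bigcup_(x < p) F x.

Definition H0 (mu : nat -> E -> R) (p : nat) (F : 'I_p -> {set E}) : Prop :=
  forall x (eta : E), eta \in F x ->
    exists l, 0 < l <= 1 /\ Un_cv (fun N => mu N eta / muS (mu N) (F x)) l.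

Definition H1 (Rs : nat -> E -> E -> R) (mu : nat -> E -> R) (p : nat)
  (F : 'I_p -> {set E}) (b : nat -> R) (rF : 'I_p -> 'I_p -> R) : Prop :=
  (forall x y, x != y ->
     0 <= rF x y /\
     Un_cv (fun N => b N * traceSetRate (Rs N) (mu N) (unionF F) (F x) (F y)) (rF x y)) /\
  0 < \big[Rplus/0]_(x < p) \big[Rplus/0]_(y < p | y != x) rF x y.

Definition H2 (Rs : nat -> E -> E -> R) (mu : nat -> E -> R) (p : nat)
  (F : 'I_p -> {set E}) (a : nat -> R) : Prop :=
  forall x, (2 <= #|F x|)%nat ->
    forall eta xi : E, eta \in F x -> xi \in F x -> eta != xi ->
      (* liminf_N a_N Cap_N(η,ξ)/μ_N(F_x) > 0 *)
      exists c, 0 < c /\ exists N0, forall N, (N0 <= N)%nat ->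
        c <= a N * Cap2 (Rs N) (mu N) eta xi / muS (mu N) (F x).

Definition H3 (Rs : nat -> E -> E -> R) (D : {set E}) (b : nat -> R) : Prop :=
  forall t, 0 < t ->
    Un_cv (fun N => \big[Rmax/0]_(eta : E) occTime (Rs N) D (b N) t eta) 0.

End Chain.

Definition reachP (p : nat) (r : 'I_p -> 'I_p -> R) : 'I_p -> 'I_p -> Prop :=
  clos_refl_trans 'I_p (fun x y => x <> y /\ 0 < r x y).

Definition commClass (p : nat) (r : 'I_p -> 'I_p -> R) (C : {set 'I_p}) : Prop :=
  exists x0, forall y, y \in C <-> (reachP r x0 y /\ reachP r y x0).

(* For fixed N, the ratio mu_N(eta) / mu_N(xi) is computed by eliminating all other
   states one at a time -- each step passes to the trace chain, whose rates are a
   Schur complement of the generator -- and applying detailed balance to the two-state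
   chain that remains. This writes the ratio as a quotient of nonnegative polynomials
   in the rates, homogeneous of the same degree. By Assumption A(ii) every ratio of two
   monomials of the same degree converges in [0, +oo], so mu_N(eta) / mu_N(xi) does,
   and by (H0) so do the block ratios mu_N(F_x) / mu_N(F_y).

   It remains to show that inside a communicating class C of r_F no block is
   negligible against another. Let K be the blocks of C that are not heavier than any
   block of C. If K <> C, there is an edge a -> c of r_F from a heavier block a into K.
   The trace process on the union of the blocks is stationary and recurrent, so the
   flow into the blocks of K is at most the flow out of them:
     beta_N r^F_N(F_a, F_c) <= sum_(x in K) mu_N(F_x) / mu_N(F_a)
                                  * sum_(y notin K) beta_N r^F_N(F_x, F_y),
   which tends to 0. This contradicts r_F(a, c) > 0. *)

From Stdlib Require Import Reals Lra Relations ClassicalEpsilon.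
From mathcomp Require Import all_boot zify.
From HB Require Import structures.
From Coquelicot Require Import Coquelicot.

Set Implicit Arguments.
Unset Strict Implicit.
Unset Printing Implicit Defensive.

Local Open Scope R_scope.

HB.instance Definition _ := Monoid.isComLaw.Build R 0 Rplus
  (fun x y z => esym (Rplus_assoc x y z)) Rplus_comm Rplus_0_l.
HB.instance Definition _ := Monoid.isComLaw.Build R 1 Rmult
  (fun x y z => esym (Rmult_assoc x y z)) Rmult_comm Rmult_1_l.
HB.instance Definition _ := Monoid.isMulLaw.Build R 0 Rmult Rmult_0_l Rmult_0_r.
HB.instance Definition _ :=
  Monoid.isAddLaw.Build R Rmult Rplus Rmult_plus_distr_r Rmult_plus_distr_l.

Lemma sumR_le (I : Type) (r : seq I) (P : pred I) (f g : I -> R) :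
  (forall i, P i -> f i <= g i) ->
  \big[Rplus/0]_(i <- r | P i) f i <= \big[Rplus/0]_(i <- r | P i) g i.
Proof. by move=> fg; apply: (big_ind2 (fun a b => a <= b)) => *; lra || auto. Qed.

Lemma sumR_ge0 (I : Type) (r : seq I) (P : pred I) (f : I -> R) :
  (forall i, P i -> 0 <= f i) -> 0 <= \big[Rplus/0]_(i <- r | P i) f i.
Proof. by move=> f_ge0; apply: (big_ind (fun a => 0 <= a)) => *; lra || auto. Qed.

Lemma sumR_le_subset (I : Type) (r : seq I) (P Q : pred I) (f : I -> R) :
  (forall i, Q i -> 0 <= f i) -> (forall i, P i -> Q i) ->
  \big[Rplus/0]_(i <- r | P i) f i <= \big[Rplus/0]_(i <- r | Q i) f i.
Proof.
move=> f_ge0 PQ; rewrite (big_mkcond P) (big_mkcond Q); apply: sumR_le => i _.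
by case: ifP => [/PQ ->|_]; [lra | case: ifP => [/f_ge0|_]; lra].
Qed.

Lemma sumR_minus (I : Type) (r : seq I) (P : pred I) (f g : I -> R) :
  \big[Rplus/0]_(i <- r | P i) (f i - g i) =
  \big[Rplus/0]_(i <- r | P i) f i - \big[Rplus/0]_(i <- r | P i) g i.
Proof.
rewrite /Rminus big_split /=; congr (_ + _).
by apply: (big_ind2 (fun x y => x = - y)) => [|x1 x2 y1 y2 -> ->|//]; ring.
Qed.

Lemma sumR_eq0_nonneg (T : finType) (f : T -> R) j :
  (forall i, 0 <= f i) -> \big[Rplus/0]_(i : T) f i = 0 -> f j = 0.
Proof.
move=> f_ge0; rewrite (bigD1 j) //=.
have : 0 <= \big[Rplus/0]_(i | i != j) f i by apply: sumR_ge0.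
have := f_ge0 j; lra.
Qed.

Lemma sumR_le_cover (T I : finType) (f : T -> R) (U : {set T}) (J : pred I)
    (Us : I -> {set T}) :
  (forall t, 0 <= f t) -> (forall t, t \in U -> exists2 i, J i & t \in Us i) ->
  \big[Rplus/0]_(t in U) f t <= \big[Rplus/0]_(i | J i) \big[Rplus/0]_(t in Us i) f t.
Proof.
move=> f_ge0 cover.
have ind_ge0 i t : 0 <= if t \in Us i then f t else 0 by case: ifP => _; [exact: f_ge0 | lra].
have -> : \big[Rplus/0]_(i | J i) \big[Rplus/0]_(t in Us i) f t =
    \big[Rplus/0]_(t : T) \big[Rplus/0]_(i | J i) (if t \in Us i then f t else 0).
  rewrite (exchange_big (Rplus : Monoid.com_law 0)) /=.
  by apply: eq_bigr => i _; rewrite big_mkcond.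
rewrite big_mkcond; apply: sumR_le => t _; case: ifP => [/cover [i Ji Hi] | _].
  rewrite (bigD1 i) //= Hi.
have := @sumR_ge0 _ (index_enum I) (fun j => J j && (j != i)) _ (fun j _ => ind_ge0 j t); lra.
exact: sumR_ge0.
Qed.

Lemma is_lim_seq_sumR (I : Type) (r : seq I) (P : pred I) (u : I -> nat -> R) (l : I -> R) :
  (forall i, P i -> is_lim_seq (u i) (l i)) ->
  is_lim_seq (fun N => \big[Rplus/0]_(i <- r | P i) u i N) (\big[Rplus/0]_(i <- r | P i) l i).
Proof.
move=> ul; elim: r => [|a r IH].
  by apply: (is_lim_seq_ext (fun=> 0)) => [N|]; rewrite ?big_nil //; exact: is_lim_seq_const.
rewrite big_cons; case: ifP => Pa; last first.
  by apply: is_lim_seq_ext IH => N; rewrite big_cons Pa.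
apply: (is_lim_seq_ext (fun N => u a N + \big[Rplus/0]_(i <- r | P i) u i N)).
  by move=> N; rewrite big_cons Pa.
exact: is_lim_seq_plus (ul a Pa) IH _.
Qed.

Lemma is_lim_seq_ge0 (u : nat -> R) (l : Rbar) :
  (forall N, 0 <= u N) -> is_lim_seq u l -> Rbar_le 0 l.
Proof. by move=> u_ge0; apply: is_lim_seq_le u_ge0 (is_lim_seq_const 0). Qed.

Lemma is_lim_seq_inv_0 (u : nat -> R) :
  (forall N, 0 < u N) -> is_lim_seq u 0 -> is_lim_seq (fun N => / u N) p_infty.
Proof.
move=> u_gt0 u0; apply: (filterlim_comp _ _ _ u Rinv _ (at_right 0)); last first.
  exact: filterlim_Rinv_0_right.
move=> P HP; apply: (filter_imp (F := eventually) _ _ _ (u0 _ HP)) => n; apply.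
exact: u_gt0.
Qed.

Lemma ex_lim_seq_inv_pos (u : nat -> R) :
  (forall N, 0 < u N) -> ex_lim_seq u -> ex_lim_seq (fun N => / u N).
Proof.
move=> u_gt0 [l ul]; case: (Rbar_eq_dec l 0) => [l0|l_neq0].
  by exists p_infty; apply: is_lim_seq_inv_0; rewrite -?l0.
by exists (Rbar_inv l); exact: is_lim_seq_inv.
Qed.

Lemma ex_lim_seq_div_pos (u v : nat -> R) :
  (forall N, 0 < u N) -> (forall N, 0 < v N) ->
  ex_lim_seq (fun N => u N / v N) -> ex_lim_seq (fun N => v N / u N).
Proof.
move=> u_gt0 v_gt0 uv.
have [l Hl] := ex_lim_seq_inv_pos (fun N => Rdiv_lt_0_compat _ _ (u_gt0 N) (v_gt0 N)) uv.
exists l; apply: is_lim_seq_ext Hl => N.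
by have := u_gt0 N; have := v_gt0 N => h1 h2; field; lra.
Qed.

Lemma is_Rbar_plus_ge0 (x y : Rbar) : Rbar_le 0 x -> Rbar_le 0 y ->
  is_Rbar_plus x y (Rbar_plus x y) /\ Rbar_le 0 (Rbar_plus x y).
Proof. by case: x => [x||] //=; case: y => [y||] //= hx hy; split => //=; lra. Qed.

Lemma Rbar_mult_ge0 (c : R) (y : Rbar) : 0 <= c -> Rbar_le 0 y -> Rbar_le 0 (Rbar_mult c y).
Proof.
move=> c_ge0; case: y => [y||] //= y_ge0; first exact: Rmult_le_pos.
by rewrite /Rbar_mult /=; case: Rle_dec => // c_ge0'; case: Rle_lt_or_eq_dec => //= _; lra.
Qed.

Lemma seqlim_eq (u : nat -> R) l : Un_cv u l -> seqlim u = l.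
Proof.
move=> ul; apply: (UL_sequence _ _ _ _ ul).
exact: epsilon_spec (inhabits 0) (fun l => Un_cv u l) (ex_intro _ l ul).
Qed.

Lemma is_lim_seq_uniqR (u : nat -> R) (l1 l2 : R) :
  is_lim_seq u l1 -> is_lim_seq u l2 -> l1 = l2.
Proof. by move=> /is_lim_seq_unique ul1 /is_lim_seq_unique; rewrite ul1 => -[]. Qed.

Lemma finite_argmaxR (T : finType) (a : T -> R) : T -> exists x, forall y, a y <= a x.
Proof.
move=> x0; suff [x _ x_max] : exists2 x, x \in x0 :: enum T &
    forall y, y \in x0 :: enum T -> a y <= a x.
  by exists x => y; apply: x_max; rewrite inE mem_enum orbT.
elim: (enum T) => [|y s [x x_in x_max]].
  by exists x0 => [|y]; rewrite ?mem_head // inE => /eqP ->; lra.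
have split_mem w : w \in [:: x0, y & s] -> w = y \/ w \in x0 :: s.
  by rewrite !inE => /or3P [->|/eqP ->|->]; [right | left | right; rewrite orbT].
have [yx|xy] := Rle_lt_dec (a y) (a x).
  exists x => [|w /split_mem [->|/x_max] //]; move: x_in; rewrite !inE.
  by case/orP=> ->; rewrite ?orbT.
exists y => [|w /split_mem [->|/x_max]]; [by rewrite !inE eqxx orbT | lra | lra].
Qed.

Lemma is_lim_seq_ratio_via (u v U V : nat -> R) (lu lv a : R) :
  (forall N, 0 < v N) -> (forall N, 0 < U N) -> (forall N, 0 < V N) -> lv <> 0 ->
  is_lim_seq (fun N => u N / U N) lu -> is_lim_seq (fun N => v N / V N) lv ->
  is_lim_seq (fun N => U N / V N) a -> is_lim_seq (fun N => u N / v N) (lu * a / lv).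
Proof.
move=> v_gt0 U_gt0 V_gt0 lv_neq0 uU vV UV.
apply: (is_lim_seq_ext (fun N => u N / U N * (U N / V N) * / (v N / V N))).
  by move=> N; have := v_gt0 N; have := U_gt0 N; have := V_gt0 N => h1 h2 h3; field; lra.
apply: is_lim_seq_mult'; first exact: is_lim_seq_mult'.
by have := is_lim_seq_inv _ _ vV; apply => -[].
Qed.

(* [atan] is an increasing bijection from [[0, +oo]] onto [[0, PI/2]]. *)
Lemma orderedPair_ex_lim (a c : nat -> R) :
  (forall N, 0 < a N) -> (forall N, 0 < c N) -> orderedPair a c ->
  ex_lim_seq (fun N => a N / c N).
Proof.
move=> a_gt0 c_gt0 [l /is_lim_seq_Reals Hl].
have ac_gt0 N : 0 < a N / c N by apply: Rdiv_lt_0_compat.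
have l_le : l <= PI / 2.
  apply: (is_lim_seq_le _ (fun=> PI / 2) _ _ _ Hl (is_lim_seq_const _)) => N.
  exact/Rlt_le/(proj2 (atan_bound _)).
case: (Rle_lt_or_eq_dec _ _ l_le) => [l_lt|l_eq].
  exists (tan l); apply: (is_lim_seq_ext (fun N => tan (atan (a N / c N)))).
    by move=> N; rewrite tan_atan.
  apply: (is_lim_seq_continuous _ _ _ _ Hl); apply: continuity_pt_div;
    [exact: continuity_sin | exact: continuity_cos | ].
  have l_ge0 : 0 <= l.
    apply: (is_lim_seq_le (fun=> 0) _ _ _ _ (is_lim_seq_const _) Hl) => N.
    by rewrite -atan_0; apply/Rlt_le/atan_increasing.
  by apply: Rgt_not_eq; apply: cos_gt_0; lra.
exists p_infty; apply/is_lim_seq_spec => M; move/is_lim_seq_spec: Hl => Hl.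
have [N0 HN0] := Hl (mkposreal (PI / 2 - atan M) ltac:(have := atan_bound M; lra)).
exists N0 => n /HN0 /=; rewrite l_eq => /Rabs_def2 [_ Hn].
case: (Rlt_le_dec M (a n / c n)) => // ac_le.
have : atan (a n / c n) <= atan M.
  by case: (Rle_lt_or_eq_dec _ _ ac_le) => [/atan_increasing|->]; lra.
lra.
Qed.

Lemma clos_rt_first_step (T : Type) (rel : T -> T -> Prop) a b :
  clos_refl_trans T rel a b -> a <> b -> exists v, rel a v.
Proof. by move=> rab; elim: (clos_rt_rt1n _ _ _ _ rab) => [x|x y w rxy _ _] //; exists y. Qed.

(** * Rational functions of the rates *)

Section RationalFunctionsOfRates.
Variable E : finType.
Variable Rs : nat -> E -> E -> R.
Variable B : {set E * E}.
Hypothesis hB : forall eta xi, (eta, xi) \in B <-> (eta <> xi /\ forall N, 0 < Rs N eta xi).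
Hypothesis hAii : forall m : nat, (1 <= m)%nat -> forall k1 k2 : E * E -> nat,
  (\sum_(pr in B) k1 pr)%N = m -> (\sum_(pr in B) k2 pr)%N = m ->
  orderedPair (monomial Rs B k1) (monomial Rs B k2).

Local Notation mono := (monomial Rs B).

Definition degree (k : E * E -> nat) := (\sum_(pr in B) k pr)%N.

Lemma monomial_gt0 k N : 0 < mono k N.
Proof.
apply: (big_ind (fun x => 0 < x)) => [|x y|[a b] /hB [_ Rab]]; first lra.
  exact: Rmult_lt_0_compat.
exact: pow_lt.
Qed.

Lemma monomialD k1 k2 N : mono (fun pr => k1 pr + k2 pr)%N N = mono k1 N * mono k2 N.
Proof. by rewrite /monomial -big_split; apply: eq_bigr => pr _; exact: pow_add. Qed.

Lemma degreeD k1 k2 : degree (fun pr => k1 pr + k2 pr)%N = (degree k1 + degree k2)%N.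
Proof. exact: big_split. Qed.

Lemma monomial_degree0 k N : degree k = 0%N -> mono k N = 1.
Proof.
move/eqP; rewrite /degree sum_nat_eq0 => /forall_inP k0.
by rewrite /monomial big1 // => pr /k0 /eqP ->.
Qed.

Lemma monomial_ratio_ex_lim d k1 k2 : degree k1 = d -> degree k2 = d ->
  ex_lim_seq (fun N => mono k1 N / mono k2 N).
Proof.
case: d => [|d] k1d k2d.
  exists 1; apply: (is_lim_seq_ext (fun=> 1)); last exact: is_lim_seq_const.
  by move=> N; rewrite !monomial_degree0 //; field.
apply: orderedPair_ex_lim; [exact: monomial_gt0 | exact: monomial_gt0 |].
exact: (hAii (m := d.+1)).
Qed.

(* A polynomial in the rates is a list of (coefficient, exponent vector) pairs. *)
Definition poly := seq (R * (E * E -> nat)).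

Definition peval (P : poly) N := \big[Rplus/0]_(t <- P) (t.1 * mono t.2 N).

Definition homogeneous (d : nat) (P : poly) :=
  List.Forall (fun t => 0 <= t.1 /\ degree t.2 = d) P.

Definition pmul (P Q : poly) : poly :=
  [seq (t.1 * s.1, fun pr => (t.2 pr + s.2 pr)%N) | t <- P, s <- Q].

Lemma peval_cat P Q N : peval (P ++ Q) N = peval P N + peval Q N.
Proof. exact: big_cat. Qed.

Lemma peval_mul P Q N : peval (pmul P Q) N = peval P N * peval Q N.
Proof.
rewrite /peval /pmul big_allpairs_dep big_distrl; apply: eq_bigr => t _ /=.
by rewrite big_distrr; apply: eq_bigr => s _ /=; rewrite monomialD; ring.
Qed.

Lemma homogeneous_cat d P Q : homogeneous d P -> homogeneous d Q -> homogeneous d (P ++ Q).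
Proof. by move=> HP HQ; apply/List.Forall_app. Qed.

Lemma homogeneous_mul d1 d2 P Q :
  homogeneous d1 P -> homogeneous d2 Q -> homogeneous (d1 + d2) (pmul P Q).
Proof.
rewrite /homogeneous; elim=> [|t P' [t1_ge0 t2d] _ IH] HQ //.
rewrite /pmul allpairs_cons; apply: homogeneous_cat (IH HQ).
elim: HQ => [|s Q' [s1_ge0 s2d] _ IHQ] //=; constructor => //.
by rewrite degreeD t2d s2d; split => //; exact: Rmult_le_pos.
Qed.

Lemma peval_div_lim d P (t : nat -> R) : homogeneous d P -> (forall N, 0 < t N) ->
  (forall k, degree k = d -> ex_lim_seq (fun N => mono k N / t N)) ->
  exists2 l, Rbar_le 0 l & is_lim_seq (fun N => peval P N / t N) l.
Proof.
move=> HP t_gt0 mono_t; elim: HP => [|a P' [a1_ge0 a2d] _ [l2 l2_ge0 Hl2]].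
  exists (Finite 0) => /=; first lra.
  apply: (is_lim_seq_ext (fun=> 0)); last exact: is_lim_seq_const.
  by move=> N; rewrite /peval big_nil /Rdiv Rmult_0_l.
have [l1 Hl1] := mono_t _ a2d.
have l1_ge0 : Rbar_le 0 l1.
  apply: is_lim_seq_ge0 Hl1 => N; apply/Rlt_le/Rdiv_lt_0_compat => //; exact: monomial_gt0.
have [Hsum sum_ge0] := is_Rbar_plus_ge0 (Rbar_mult_ge0 a1_ge0 l1_ge0) l2_ge0.
exists (Rbar_plus (Rbar_mult a.1 l1) l2) => //.
apply: (is_lim_seq_ext (fun N => a.1 * (mono a.2 N / t N) + peval P' N / t N)).
  by move=> N; rewrite /peval big_cons; field; apply: Rgt_not_eq.
exact: is_lim_seq_plus (is_lim_seq_scal_l _ _ _ Hl1) Hl2 Hsum.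
Qed.

Lemma homogeneous_ratio_ex_lim d P Q : homogeneous d P -> homogeneous d Q ->
  (forall N, 0 < peval P N) -> (forall N, 0 < peval Q N) ->
  ex_lim_seq (fun N => peval P N / peval Q N).
Proof.
move=> HP HQ P_gt0 Q_gt0.
have P_mono k : degree k = d -> ex_lim_seq (fun N => peval P N / mono k N).
  move=> kd; have [k' k'd|l _ Hl] := peval_div_lim HP (monomial_gt0 k); last by exists l.
  exact: monomial_ratio_ex_lim k'd kd.
have [l _ Hl] : exists2 l, Rbar_le 0 l & is_lim_seq (fun N => peval Q N / peval P N) l.
  apply: (peval_div_lim HQ P_gt0) => k kd.
  exact: ex_lim_seq_div_pos P_gt0 (monomial_gt0 k) (P_mono k kd).
exact: ex_lim_seq_div_pos Q_gt0 P_gt0 (ex_intro _ l Hl).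
Qed.

Definition ratfun (e : nat) (r : nat -> R) := exists d P Q,
  [/\ homogeneous (d + e) P, homogeneous d Q, (forall N, 0 < peval Q N) &
      forall N, r N = peval P N / peval Q N].

Lemma ratfun_ext e (r1 r2 : nat -> R) : ratfun e r1 -> (forall N, r1 N = r2 N) -> ratfun e r2.
Proof.
by move=> [d [P [Q [HP HQ Q_gt0 r1PQ]]]] r12; exists d, P, Q; split => // N; rewrite -r12.
Qed.

Definition kzero : E * E -> nat := fun _ => 0%N.

Lemma degree_kzero : degree kzero = 0%N.
Proof. exact: big1. Qed.

Lemma peval_one N : peval [:: (1, kzero)] N = 1.
Proof. by rewrite /peval big_seq1 monomial_degree0 ?degree_kzero //=; ring. Qed.

Lemma homogeneous_one : homogeneous 0 [:: (1, kzero)].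
Proof. by constructor => //; split; [simpl; lra | exact: degree_kzero]. Qed.

Lemma ratfun0 e : ratfun e (fun=> 0).
Proof.
exists 0%N, [::], [:: (1, kzero)]; split; [by [] | exact: homogeneous_one | |].
  by move=> N; rewrite peval_one; lra.
by move=> N; rewrite peval_one /peval big_nil /Rdiv Rmult_0_l.
Qed.

Lemma ratfun_rate a b : (a, b) \in B -> ratfun 1 (fun N => Rs N a b).
Proof.
move=> ab_in_B; pose ind pr : nat := pr == (a, b).
have ind_other pr : pr != (a, b) -> ind pr = 0%N by move/negbTE; rewrite /ind => ->.
have deg_ind : degree ind = 1%N.
  by rewrite /degree (bigD1 (a, b)) //= big1 => [|pr /andP [_ /ind_other]]; rewrite /ind ?eqxx.
have mono_ind N : mono ind N = Rs N a b.
  rewrite /monomial (bigD1 (a, b)) //= big1 => [|pr /andP [_ /ind_other ->] //].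
  by rewrite /ind eqxx /=; ring.
exists 0%N, [:: (1, ind)], [:: (1, kzero)]; split; [ | exact: homogeneous_one | |].
- by constructor => //; split; [simpl; lra | exact: deg_ind].
- by move=> N; rewrite peval_one; lra.
by move=> N; rewrite peval_one /peval big_seq1 /= mono_ind; field.
Qed.

Lemma ratfun_add e r1 r2 : ratfun e r1 -> ratfun e r2 -> ratfun e (fun N => r1 N + r2 N).
Proof.
move=> [d1 [P1 [Q1 [HP1 HQ1 Q1_gt0 r1E]]]] [d2 [P2 [Q2 [HP2 HQ2 Q2_gt0 r2E]]]].
exists (d1 + d2)%N, (pmul P1 Q2 ++ pmul P2 Q1), (pmul Q1 Q2); split.
- apply: homogeneous_cat.
    by rewrite (_ : (d1 + d2 + e = d1 + e + d2)%N); [exact: homogeneous_mul | lia].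
  by rewrite (_ : (d1 + d2 + e = d2 + e + d1)%N); [exact: homogeneous_mul | lia].
- exact: homogeneous_mul.
- by move=> N; rewrite peval_mul; apply: Rmult_lt_0_compat.
move=> N; rewrite r1E r2E peval_cat !peval_mul.
by have := Q1_gt0 N; have := Q2_gt0 N => h1 h2; field; lra.
Qed.

Lemma ratfun_mul e1 e2 r1 r2 :
  ratfun e1 r1 -> ratfun e2 r2 -> ratfun (e1 + e2) (fun N => r1 N * r2 N).
Proof.
move=> [d1 [P1 [Q1 [HP1 HQ1 Q1_gt0 r1E]]]] [d2 [P2 [Q2 [HP2 HQ2 Q2_gt0 r2E]]]].
exists (d1 + d2)%N, (pmul P1 P2), (pmul Q1 Q2); split.
- by rewrite (_ : (d1 + d2 + (e1 + e2) = d1 + e1 + (d2 + e2))%N); [exact: homogeneous_mul | lia].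
- exact: homogeneous_mul.
- by move=> N; rewrite peval_mul; apply: Rmult_lt_0_compat.
move=> N; rewrite r1E r2E !peval_mul.
by have := Q1_gt0 N; have := Q2_gt0 N => h1 h2; field; lra.
Qed.

Lemma ratfun_num_gt0 e r : ratfun e r -> (forall N, 0 < r N) ->
  exists d P Q, [/\ homogeneous (d + e) P, homogeneous d Q, (forall N, 0 < peval Q N),
    (forall N, 0 < peval P N) & forall N, r N = peval P N / peval Q N].
Proof.
move=> [d [P [Q [HP HQ Q_gt0 rE]]]] r_gt0; exists d, P, Q; split => // N.
have := r_gt0 N; rewrite rE => PQ_gt0; have := Q_gt0 N => QN_gt0.
have -> : peval P N = peval P N / peval Q N * peval Q N by field; lra.
exact: Rmult_lt_0_compat.
Qed.

Lemma ratfun_div e e2 r1 r2 : ratfun (e + e2) r1 -> ratfun e2 r2 -> (forall N, 0 < r2 N) ->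
  ratfun e (fun N => r1 N / r2 N).
Proof.
move=> [d1 [P1 [Q1 [HP1 HQ1 Q1_gt0 r1E]]]] r2_rat r2_gt0.
have [d2 [P2 [Q2 [HP2 HQ2 Q2_gt0 P2_gt0 r2E]]]] := ratfun_num_gt0 r2_rat r2_gt0.
exists (d1 + (d2 + e2))%N, (pmul P1 Q2), (pmul Q1 P2); split.
- by rewrite (_ : (d1 + (d2 + e2) + e = d1 + (e + e2) + d2)%N); [exact: homogeneous_mul | lia].
- exact: homogeneous_mul.
- by move=> N; rewrite peval_mul; apply: Rmult_lt_0_compat.
move=> N; rewrite r1E r2E !peval_mul.
by have := Q1_gt0 N; have := Q2_gt0 N; have := P2_gt0 N => h0 h1 h2; field; lra.
Qed.

Lemma ratfun_sum (I : Type) e (r : seq I) (P : pred I) (f : I -> nat -> R) :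
  (forall i, P i -> ratfun e (f i)) -> ratfun e (fun N => \big[Rplus/0]_(i <- r | P i) f i N).
Proof.
move=> f_rat; elim: r => [|a r IH].
  by apply: (ratfun_ext (ratfun0 e)) => N; rewrite big_nil.
case Pa: (P a).
  by apply: (ratfun_ext (ratfun_add (f_rat a Pa) IH)) => N; rewrite big_cons Pa.
by apply: (ratfun_ext IH) => N; rewrite big_cons Pa.
Qed.

Lemma ratfun0_ex_lim r : ratfun 0 r -> (forall N, 0 < r N) -> ex_lim_seq r.
Proof.
move=> r_rat r_gt0; have [d [P [Q [HP HQ Q_gt0 P_gt0 rE]]]] := ratfun_num_gt0 r_rat r_gt0.
rewrite addn0 in HP; have [l Hl] := homogeneous_ratio_ex_lim HP HQ P_gt0 Q_gt0.
by exists l; apply: is_lim_seq_ext Hl => N; rewrite rE.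
Qed.

End RationalFunctionsOfRates.

(** * Elimination of states *)

Section StateElimination.
Variable E : finType.
Implicit Types (S : {set E}) (Rt : E -> E -> R).

Definition holdingIn S Rt z := \big[Rplus/0]_(b in S | b != z) Rt z b.

(* Rates of the trace of the chain on [S :\ z]: a jump into [z] is merged with the jump
   out of [z] (Schur complement of the generator). *)
Definition elimRate S z Rt a b := Rt a b + Rt a z * Rt z b / holdingIn S Rt z.

Definition edgeIn S Rt u v := [/\ u \in S, v \in S, u <> v & 0 < Rt u v].

Definition nonnegIn S Rt := forall a b, a \in S -> b \in S -> a <> b -> 0 <= Rt a b.

Definition irreducibleIn S Rt :=
  forall a b, a \in S -> b \in S -> clos_refl_trans E (edgeIn S Rt) a b.

Definition invariantIn S Rt (m : E -> R) := forall xi, xi \in S ->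
  \big[Rplus/0]_(eta in S | eta != xi) (m eta * Rt eta xi) = m xi * holdingIn S Rt xi.

Lemma big_in_neq_D1 S z xi (f : E -> R) : z \in S -> z != xi ->
  \big[Rplus/0]_(eta in S | eta != xi) f eta =
  f z + \big[Rplus/0]_(eta | [&& eta \in S, eta != xi & eta != z]) f eta.
Proof.
move=> z_in zxi; rewrite (bigD1 z) /= ?z_in ?zxi //.
by congr (_ + _); apply: eq_bigl => x; rewrite andbA.
Qed.

Lemma big_setD1_neq S z xi (f : E -> R) :
  \big[Rplus/0]_(eta in S :\ z | eta != xi) f eta =
  \big[Rplus/0]_(eta | [&& eta \in S, eta != xi & eta != z]) f eta.
Proof.
by apply: eq_bigl => x; rewrite in_setD1; case: (x \in S); case: (x != z); case: (x != xi).
Qed.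

Variables (S : {set E}) (Rt : E -> E -> R) (z : E).
Hypothesis Rt_ge0 : nonnegIn S Rt.
Hypothesis z_in : z \in S.

Lemma holdingIn_gt0 w : irreducibleIn S Rt -> w \in S -> w != z -> 0 < holdingIn S Rt z.
Proof.
move=> Rt_irr w_in wz.
have [v [_ v_in zv Rzv]] : exists v, edgeIn S Rt z v.
  by apply: clos_rt_first_step (Rt_irr z w z_in w_in) _ => zw; rewrite zw eqxx in wz.
rewrite /holdingIn (bigD1 v) /=; last by rewrite v_in; apply/eqP => vz; apply: zv.
suff : 0 <= \big[Rplus/0]_(i | (i \in S) && (i != z) && (i != v)) Rt z i by lra.
by apply: sumR_ge0 => i /andP [/andP [i_in /eqP iz] _]; apply: Rt_ge0 => // zi; apply: iz.
Qed.

Hypothesis hold_gt0 : 0 < holdingIn S Rt z.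

Lemma excursionRate_ge0 a b : a \in S -> b \in S -> a <> z -> b <> z ->
  0 <= Rt a z * Rt z b / holdingIn S Rt z.
Proof.
move=> a_in b_in az bz; apply: Rmult_le_pos; last exact/Rlt_le/Rinv_0_lt_compat.
by apply: Rmult_le_pos; apply: Rt_ge0 => // zb; apply: bz.
Qed.

Lemma elimRate_nonneg : nonnegIn (S :\ z) (elimRate S z Rt).
Proof.
move=> a b; rewrite !in_setD1 => /andP [/eqP az a_in] /andP [/eqP bz b_in] ab.
by have := Rt_ge0 a_in b_in ab; have := excursionRate_ge0 a_in b_in az bz; rewrite /elimRate; lra.
Qed.

Local Notation reducedPath := (clos_refl_trans E (edgeIn (S :\ z) (elimRate S z Rt))).

Lemma elimRate_edge a b : a \in S :\ z -> b \in S :\ z -> a <> b ->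
  0 < Rt a b \/ (0 < Rt a z /\ 0 < Rt z b) -> edgeIn (S :\ z) (elimRate S z Rt) a b.
Proof.
move=> a_in' b_in' ab Rab; split => //.
move: a_in' b_in'; rewrite !in_setD1 => /andP [/eqP az a_in] /andP [/eqP bz b_in].
have := Rt_ge0 a_in b_in ab; have := excursionRate_ge0 a_in b_in az bz.
rewrite /elimRate; case: Rab => [|[Raz Rzb]]; first lra.
have : 0 < Rt a z * Rt z b / holdingIn S Rt z.
  by apply: Rmult_lt_0_compat; [exact: Rmult_lt_0_compat | exact: Rinv_0_lt_compat].
lra.
Qed.

Lemma elimRate_path u v : clos_refl_trans_1n E (edgeIn S Rt) u v -> v \in S :\ z ->
  (u \in S :\ z -> reducedPath u v) /\
  (u = z -> forall a, a \in S :\ z -> 0 < Rt a z -> reducedPath a v).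
Proof.
elim=> [x|x y w [x_in y_in xy Rxy] _ IH] w_in.
  by split=> [_|xz]; [exact: rt_refl | move: w_in; rewrite xz in_setD1 eqxx].
have [IH1 IH2] := IH w_in.
split=> [x_in'|xz a a_in Raz].
  have [yz|yz] := eqVneq y z; first by apply: IH2 => //; rewrite -yz.
  have y_in' : y \in S :\ z by rewrite in_setD1 yz.
  by apply: rt_trans (IH1 y_in'); apply/rt_step/elimRate_edge => //; left.
have y_in' : y \in S :\ z.
  by rewrite in_setD1 y_in andbT; apply/eqP => yz; apply: xy; rewrite xz yz.
have [-> | ay] := eqVneq a y; first exact: IH1.
apply: rt_trans (IH1 y_in'); apply/rt_step/elimRate_edge => //; first exact/eqP.
by right; split; rewrite // -xz.
Qed.

Lemma elimRate_irreducible : irreducibleIn S Rt -> irreducibleIn (S :\ z) (elimRate S z Rt).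
Proof.
move=> Rt_irr a b a_in b_in; move: (a_in) (b_in); rewrite !in_setD1 => /andP [_ a_S] /andP [_ b_S].
exact: (proj1 (elimRate_path (clos_rt_rt1n _ _ _ _ (Rt_irr a b a_S b_S)) b_in)).
Qed.

Lemma elimRate_invariant (m : E -> R) :
  invariantIn S Rt m -> invariantIn (S :\ z) (elimRate S z Rt) m.
Proof.
move=> m_inv xi; rewrite in_setD1 => /andP [xz xi_in]; have zx : z != xi by rewrite eq_sym.
have l_gt0 := hold_gt0; set l := holdingIn S Rt z in l_gt0 *.
have swap (f : E -> R) : \big[Rplus/0]_(i | [&& i \in S, i != z & i != xi]) f i =
    \big[Rplus/0]_(i | [&& i \in S, i != xi & i != z]) f i.
  by apply: eq_bigl => x; case: (x \in S); case: (x != z); case: (x != xi).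
set A1 := \big[Rplus/0]_(i | [&& i \in S, i != xi & i != z]) (m i * Rt i xi).
set A2 := \big[Rplus/0]_(i | [&& i \in S, i != xi & i != z]) (m i * Rt i z).
set A3 := \big[Rplus/0]_(i | [&& i \in S, i != xi & i != z]) Rt xi i.
set A4 := \big[Rplus/0]_(i | [&& i \in S, i != xi & i != z]) Rt z i.
have bal_xi : m z * Rt z xi + A1 = m xi * (Rt xi z + A3).
  by move: (m_inv xi xi_in); rewrite /holdingIn !(big_in_neq_D1 _ z_in zx).
have bal_z : m xi * Rt xi z + A2 = m z * l.
  by move: (m_inv z z_in); rewrite /l /holdingIn !(big_in_neq_D1 _ xi_in xz) swap.
have l_split : l = Rt z xi + A4 by rewrite /l /holdingIn (big_in_neq_D1 _ xi_in xz) swap.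
rewrite /holdingIn !big_setD1_neq /elimRate -/l.
under eq_bigr do rewrite Rmult_plus_distr_l.
rewrite !big_split /= -/A1 -/A3.
have -> : \big[Rplus/0]_(i | [&& i \in S, i != xi & i != z]) (m i * (Rt i z * Rt z xi / l)) =
    Rt z xi / l * A2 by rewrite /A2 big_distrr; apply: eq_bigr => i _ /=; field; lra.
have -> : \big[Rplus/0]_(i | [&& i \in S, i != xi & i != z]) (Rt xi z * Rt z i / l) =
    Rt xi z / l * A4 by rewrite /A4 big_distrr; apply: eq_bigr => i _ /=; field; lra.
have -> : A1 = m xi * (Rt xi z + A3) - m z * Rt z xi by lra.
have -> : A2 = m z * l - m xi * Rt xi z by lra.
have -> : A4 = l - Rt z xi by lra.
by field; lra.
Qed.

End StateElimination.

Section TwoStates.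
Variables (E : finType) (a b : E) (Rt : E -> E -> R).
Hypothesis ab : a != b.

Lemma big_pair_neq (f : E -> R) : \big[Rplus/0]_(c in [set a; b] | c != b) f c = f a.
Proof.
apply: big_pred1 => c; rewrite !inE.
by have [->|_] := eqVneq c a; [rewrite ab | rewrite andbN].
Qed.

Lemma irreducibleIn_pair_gt0 : irreducibleIn [set a; b] Rt -> 0 < Rt a b.
Proof.
move=> Rt_irr; have a_in : a \in [set a; b] by rewrite !inE eqxx.
have b_in : b \in [set a; b] by rewrite !inE eqxx orbT.
have [v [_ v_in av Rav]] := clos_rt_first_step (Rt_irr a b a_in b_in) (elimN eqP ab).
by move: v_in Rav; rewrite !inE => /orP [/eqP v_a|/eqP ->] //; rewrite v_a in av.
Qed.

Lemma invariantIn_pair_balance (m : E -> R) :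
  invariantIn [set a; b] Rt m -> m a * Rt a b = m b * Rt b a.
Proof.
move=> m_inv; have := m_inv b; rewrite /holdingIn !big_pair_neq; apply.
by rewrite !inE eqxx orbT.
Qed.

End TwoStates.

Lemma invariantProb_gt0 (E : finType) (Rt : E -> E -> R) (m : E -> R) :
  (forall a b, a <> b -> 0 <= Rt a b) -> irreducible Rt -> invariantProb Rt m ->
  forall eta, 0 < m eta.
Proof.
move=> Rt_ge0 Rt_irr [m_ge0 [m_sum m_inv]] eta.
have [a m_a] : exists a, 0 < m a.
  apply: NNPP => no_pos.
  suff : \big[Rplus/0]_(e : E) m e <= \big[Rplus/0]_(e : E) 0 by rewrite [X in _ <= X]big1 //; lra.
  apply: sumR_le => e _.
  by apply: Rnot_lt_le => m_e; apply: no_pos; exists e.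
elim: (Rt_irr a eta) m_a => {eta} [x y [xy Rxy] m_x|//|x y w _ IHxy _ IHyw /IHxy /IHyw //].
have : m x * Rt x y <= \big[Rplus/0]_(e | e != y) (m e * Rt e y).
  rewrite (bigD1 x) /=; last exact/eqP.
  suff : 0 <= \big[Rplus/0]_(e | (e != y) && (e != x)) (m e * Rt e y) by lra.
  by apply: sumR_ge0 => e /andP [/eqP ey _]; apply: Rmult_le_pos => //; exact: Rt_ge0.
rewrite m_inv; have := Rmult_lt_0_compat _ _ m_x Rxy.
case: (Rle_lt_or_eq_dec _ _ (m_ge0 y)) => // <-; lra.
Qed.

Section MassRatios.
Variables (E : finType) (Rs : nat -> E -> E -> R) (B : {set E * E}) (mu : nat -> E -> R).
Hypothesis hAi : forall eta xi : E, eta <> xi ->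
  (forall N, Rs N eta xi = 0) \/ (forall N, 0 < Rs N eta xi).
Hypothesis hB : forall eta xi, (eta, xi) \in B <-> (eta <> xi /\ forall N, 0 < Rs N eta xi).
Hypothesis hAii : forall m : nat, (1 <= m)%nat -> forall k1 k2 : E * E -> nat,
  (\sum_(pr in B) k1 pr)%N = m -> (\sum_(pr in B) k2 pr)%N = m ->
  orderedPair (monomial Rs B k1) (monomial Rs B k2).
Hypothesis hirr : forall N, irreducible (Rs N).
Hypothesis hmu : forall N, invariantProb (Rs N) (mu N).

Lemma rate_ge0 N a b : a <> b -> 0 <= Rs N a b.
Proof. by move=> /hAi [->|/(_ N) /Rlt_le]; [lra|]. Qed.

Lemma mu_gt0 N eta : 0 < mu N eta.
Proof. exact: invariantProb_gt0 (@rate_ge0 N) (hirr N) (hmu N) eta. Qed.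

Fixpoint elimRates (zs : seq E) (S : {set E}) (Rt : E -> E -> R) : E -> E -> R :=
  if zs is z :: zs' then elimRates zs' (S :\ z) (elimRate S z Rt) else Rt.

Definition reducedChain (S : {set E}) (Rseq : nat -> E -> E -> R) :=
  (forall N, [/\ nonnegIn S (Rseq N), irreducibleIn S (Rseq N) & invariantIn S (Rseq N) (mu N)]) /\
  (forall a b, a \in S -> b \in S -> a <> b -> ratfun Rs B 1 (fun N => Rseq N a b)).

Lemma reducedChain_rates : reducedChain setT Rs.
Proof.
split=> [N|a b _ _ ab].
  split=> [a b _ _|a b _ _|xi _]; first exact: rate_ge0.
    elim: (hirr N a b) => [x y [xy Rxy]|x|x y w _ IH1 _ IH2].
    - by apply: rt_step; split; rewrite ?in_setT.
    - exact: rt_refl.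
    - exact: rt_trans IH1 IH2.
  rewrite /holdingIn (eq_bigl (fun c => c != xi)) => [|c]; last by rewrite in_setT.
  rewrite [in RHS](eq_bigl (fun c => c != xi)) => [|c]; last by rewrite in_setT.
  by have [_ [_ ->]] := hmu N.
have [Rab0|Rab_gt0] := hAi ab; first by apply: (ratfun_ext (ratfun0 Rs B 1)) => N; rewrite Rab0.
by apply: ratfun_rate; apply/hB.
Qed.

Lemma reducedChain_elim (S : {set E}) (Rseq : nat -> E -> E -> R) (z w : E) :
  z \in S -> w \in S -> w != z -> reducedChain S Rseq ->
  reducedChain (S :\ z) (fun N => elimRate S z (Rseq N)).
Proof.
move=> z_in w_in wz [Rseq_chain Rseq_rat].
have hold_gt0 N : 0 < holdingIn S (Rseq N) z.
  by have [Rge0 Rirr _] := Rseq_chain N; exact: (holdingIn_gt0 Rge0 z_in Rirr w_in wz).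
split=> [N|a b].
  have [Rge0 Rirr Rinv] := Rseq_chain N.
  by split; [exact: elimRate_nonneg | exact: elimRate_irreducible | exact: elimRate_invariant].
rewrite !in_setD1 => /andP [/eqP az a_in] /andP [/eqP bz b_in] ab.
apply: ratfun_add; first exact: Rseq_rat.
apply: (ratfun_div (e2 := 1%N)) => //.
  by apply: (ratfun_mul (e1 := 1%N) (e2 := 1%N)); apply: Rseq_rat => // zb; apply: bz.
rewrite /holdingIn; apply: ratfun_sum => i /andP [i_in iz].
by apply: Rseq_rat => // zi; rewrite zi eqxx in iz.
Qed.

Lemma reducedChain_elimRates (zs : seq E) (S : {set E}) (Rseq : nat -> E -> E -> R) (eta : E) :
  uniq zs -> {subset zs <= S} -> eta \in S -> eta \notin zs -> reducedChain S Rseq ->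
  reducedChain (S :\: [set x in zs]) (fun N => elimRates zs S (Rseq N)).
Proof.
elim: zs S Rseq => [|z zs IH] S Rseq /=.
  by move=> *; rewrite (_ : [set x in [::]] = set0) ?setD0 //; apply/setP => x; rewrite !inE.
move=> /andP [z_zs zs_uniq] zs_sub eta_in; rewrite in_cons negb_or => /andP [eta_z eta_zs] chain.
rewrite (_ : S :\: _ = (S :\ z) :\: [set x in zs]); last first.
  by apply/setP => x; rewrite !inE negb_or; case: (x == z); case: (x \in zs); case: (x \in S).
apply: IH => //; last by apply: (reducedChain_elim _ eta_in) => //; apply: zs_sub; exact: mem_head.
- move=> x x_zs; rewrite in_setD1 zs_sub ?andbT ?in_cons ?x_zs ?orbT //.
  by apply: contraNneq z_zs => <-.
by rewrite in_setD1 eta_z.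
Qed.

Lemma mu_ratio_ex_lim eta xi : eta <> xi -> ex_lim_seq (fun N => mu N eta / mu N xi).
Proof.
move=> eta_xi; have eta_xi' : eta != xi by apply/eqP.
set zs := enum [set x | (x != eta) && (x != xi)].
have pair : setT :\: [set x in zs] = [set eta; xi].
  apply/setP => x; rewrite !inE /zs mem_enum !inE negb_and !negbK.
  by case: (x == eta); case: (x == xi).
have eta_zs : eta \notin zs by rewrite /zs mem_enum inE eqxx.
have [chain rat] := reducedChain_elimRates (enum_uniq _) (fun x _ => in_setT x) (in_setT eta)
  eta_zs reducedChain_rates.
rewrite pair in chain rat.
set Rf := fun N => elimRates zs setT (Rs N) in chain rat.
have eta_in : eta \in [set eta; xi] by rewrite !inE eqxx.
have xi_in : xi \in [set eta; xi] by rewrite !inE eqxx orbT.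
have Rf_gt0 N : 0 < Rf N eta xi /\ 0 < Rf N xi eta.
  have [_ Rirr _] := chain N; split; first exact: irreducibleIn_pair_gt0.
  by apply: irreducibleIn_pair_gt0; [rewrite eq_sym | rewrite setUC].
have [l Hl] : ex_lim_seq (fun N => Rf N xi eta / Rf N eta xi).
  apply: (ratfun0_ex_lim hB hAii) => [|N]; last by have [? ?] := Rf_gt0 N; exact: Rdiv_lt_0_compat.
  apply: (ratfun_div (e2 := 1%N)); [apply: rat => // xe; apply: eta_xi | apply: rat | ] => //.
  by move=> N; have [] := Rf_gt0 N.
exists l; apply: is_lim_seq_ext Hl => N.
have [_ _ Rinv] := chain N.
have bal : mu N eta * Rf N eta xi = mu N xi * Rf N xi eta := invariantIn_pair_balance eta_xi' Rinv.
have := mu_gt0 N xi; have := Rf_gt0 N => [[R1 R2] m_xi].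
have -> : mu N eta = mu N xi * Rf N xi eta / Rf N eta xi by rewrite -bal; field; lra.
by field; lra.
Qed.

End MassRatios.

(** * Hitting probabilities of the jump chain *)

Section JumpChain.
Variables (E : finType) (Rt : E -> E -> R) (m : E -> R).
Hypothesis Rt_ge0 : forall a b, a <> b -> 0 <= Rt a b.
Hypothesis Rt_irr : irreducible Rt.
Hypothesis m_inv : invariantProb Rt m.
Hypothesis two_states : exists a b : E, a <> b.
Implicit Types (S T A V : {set E}).

Lemma other_state (eta : E) : exists w, w <> eta.
Proof.
have [a [b ab]] := two_states.
by have [<-|] := eqVneq a eta; [exists b => /esym | exists a; exact/eqP].
Qed.

Lemma holding_gt0 eta : 0 < holding Rt eta.
Proof.
have [w w_eta] := other_state eta.
have [v [v_eta Rv]] := clos_rt_first_step (Rt_irr eta w) (nesym w_eta).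
rewrite /holding (bigD1 v) /=; last exact/eqP/nesym.
suff : 0 <= \big[Rplus/0]_(i | (i != eta) && (i != v)) Rt eta i by lra.
by apply: sumR_ge0 => i /andP [/eqP i_eta _]; exact/Rt_ge0/nesym.
Qed.

Lemma jumpP_ge0 a b : 0 <= jumpP Rt a b.
Proof.
rewrite /jumpP; case: eqP => [_|ab]; first lra.
by apply: Rmult_le_pos; [exact: Rt_ge0 | exact/Rlt_le/Rinv_0_lt_compat/holding_gt0].
Qed.

Lemma jumpP_sum1 a : \big[Rplus/0]_(b : E) jumpP Rt a b = 1.
Proof.
rewrite (bigD1 a) //= /jumpP eqxx Rplus_0_l.
rewrite (eq_bigr (fun b => Rt a b / holding Rt a)) => [|b]; last by rewrite eq_sym => /negbTE ->.
by rewrite -big_distrl /= -/(holding Rt a); have := holding_gt0 a => h; field; lra.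
Qed.

Definition jumpMeasure z := m z * holding Rt z.

Lemma jumpMeasure_ge0 z : 0 <= jumpMeasure z.
Proof. by have [m_ge0 _] := m_inv; apply: Rmult_le_pos => //; exact/Rlt_le/holding_gt0. Qed.

Lemma jumpMeasure_invariant z' :
  \big[Rplus/0]_(z : E) (jumpMeasure z * jumpP Rt z z') = jumpMeasure z'.
Proof.
rewrite {2}/jumpMeasure; have [_ [_ <-]] := m_inv.
rewrite (bigD1 z') //= /jumpP eqxx Rmult_0_r Rplus_0_l.
apply: eq_bigr => z /negbTE ->; rewrite /jumpMeasure; have := holding_gt0 z => h; field; lra.
Qed.

Definition hitOrGoOn S T k z' :=
  if z' \in S then (if z' \in T then 1 else 0) else firstHitUpTo Rt S T k z'.

Lemma firstHitUpToS S T k z :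
  firstHitUpTo Rt S T k.+1 z = \big[Rplus/0]_(z' : E) (jumpP Rt z z' * hitOrGoOn S T k z').
Proof. by []. Qed.

Lemma firstHitUpTo_ge0 S T k z : 0 <= firstHitUpTo Rt S T k z.
Proof.
elim: k z => [|k IH] z /=; first lra.
apply: sumR_ge0 => z' _; apply: Rmult_le_pos; first exact: jumpP_ge0.
by case: ifP => _; [case: ifP => _; lra | exact: IH].
Qed.

Lemma firstHitUpTo_le1 S T k z : firstHitUpTo Rt S T k z <= 1.
Proof.
elim: k z => [|k IH] z /=; first lra.
apply: (Rle_trans _ (\big[Rplus/0]_(z' : E) jumpP Rt z z')); last by rewrite jumpP_sum1; lra.
apply: sumR_le => z' _.
rewrite -[X in _ <= X]Rmult_1_r; apply: Rmult_le_compat_l; first exact: jumpP_ge0.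
by case: ifP => _; [case: ifP => _; lra | exact: IH].
Qed.

Lemma firstHitUpTo_mono S T k z : firstHitUpTo Rt S T k z <= firstHitUpTo Rt S T k.+1 z.
Proof.
elim: k z => [|k IH] z; first exact: firstHitUpTo_ge0.
rewrite firstHitUpToS (firstHitUpToS _ _ k.+1); apply: sumR_le => z' _.
apply: Rmult_le_compat_l; first exact: jumpP_ge0.
by rewrite /hitOrGoOn; case: ifP => _; [lra | exact: IH].
Qed.

Lemma firstHit_lim S T z : is_lim_seq (fun k => firstHitUpTo Rt S T k z) (firstHit Rt S T z).
Proof.
have bounded : has_ub (fun k => firstHitUpTo Rt S T k z).
  by exists 1 => x [k ->]; exact: firstHitUpTo_le1.
have [l Hl] := growing_cv _ (fun k => firstHitUpTo_mono S T k z) bounded.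
by apply/is_lim_seq_Reals; rewrite /firstHit (seqlim_eq Hl).
Qed.

Lemma firstHitUpTo_split S T k z :
  firstHitUpTo Rt S T k z = \big[Rplus/0]_(xi in T) firstHitUpTo Rt S [set xi] k z.
Proof.
elim: k z => [|k IH] z /=; first by rewrite big1.
rewrite (exchange_big (Rplus : Monoid.com_law 0)); apply: eq_bigr => z' _.
rewrite -big_distrr; congr (_ * _); case: ifP => z'_S; last exact: IH.
under eq_bigr do rewrite in_set1.
case: ifP => z'_T.
  by rewrite (bigD1 z') //= eqxx big1 ?Rplus_0_r // => xi /andP [_ /negbTE]; rewrite eq_sym => ->.
by rewrite big1 // => xi xi_T; case: eqP => // z'xi; rewrite z'xi xi_T in z'_T.
Qed.

Lemma firstHit_split S T z :
  firstHit Rt S T z = \big[Rplus/0]_(xi in T) firstHit Rt S [set xi] z.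
Proof.
apply: (is_lim_seq_uniqR (@firstHit_lim S T z)).
apply: (is_lim_seq_ext _ _ _ (fun k => esym (firstHitUpTo_split S T k z))).
by apply: is_lim_seq_sumR => xi _; exact: (@firstHit_lim).
Qed.

Lemma firstHit_ge0 S T z : 0 <= firstHit Rt S T z.
Proof.
exact: is_lim_seq_le (fun=> 0) _ 0 _ (fun k => firstHitUpTo_ge0 S T k z)
  (is_lim_seq_const 0) (@firstHit_lim S T z).
Qed.

Lemma firstHit_le1 S T z : firstHit Rt S T z <= 1.
Proof.
exact: is_lim_seq_le _ (fun=> 1) _ 1 (fun k => firstHitUpTo_le1 S T k z)
  (@firstHit_lim S T z) (is_lim_seq_const 1).
Qed.

Lemma firstHit_step S T z : firstHit Rt S T z =
  \big[Rplus/0]_(z' : E) (jumpP Rt z z' *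
     (if z' \in S then (if z' \in T then 1 else 0) else firstHit Rt S T z')).
Proof.
apply: (is_lim_seq_uniqR (proj1 (is_lim_seq_incr_1 _ _) (@firstHit_lim S T z))).
apply: (is_lim_seq_ext _ _ _ (fun k => esym (firstHitUpToS S T k z))).
apply: is_lim_seq_sumR => z' _; apply: is_lim_seq_mult'; first exact: is_lim_seq_const.
by rewrite /hitOrGoOn; case: (z' \in S); [exact: is_lim_seq_const | exact: firstHit_lim].
Qed.

Lemma firstHit_le_subset S V (V' : {set E}) z :
  V \subset V' -> firstHit Rt S V z <= firstHit Rt S V' z.
Proof.
move=> VV'; rewrite (firstHit_split S V) (firstHit_split S V').
by apply: sumR_le_subset => [xi _|xi]; [exact: firstHit_ge0 | exact: (subsetP VV')].
Qed.

Lemma firstHit_le_cover (I : finType) S V (J : pred I) (Vs : I -> {set E}) z :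
  (forall xi, xi \in V -> exists2 i, J i & xi \in Vs i) ->
  firstHit Rt S V z <= \big[Rplus/0]_(i | J i) firstHit Rt S (Vs i) z.
Proof.
move=> cover; rewrite (firstHit_split S V).
under [X in _ <= X]eq_bigr do rewrite (firstHit_split S (Vs _)).
exact: sumR_le_cover (fun xi => firstHit_ge0 S [set xi] z) cover.
Qed.

Definition escapeProb S z := 1 - firstHit Rt S S z.

Lemma escapeProb_ge0 S z : 0 <= escapeProb S z.
Proof. by have := firstHit_le1 S S z; rewrite /escapeProb; lra. Qed.

Lemma escapeProb_step S z : escapeProb S z =
  \big[Rplus/0]_(z' : E) (jumpP Rt z z' * (if z' \in S then 0 else escapeProb S z')).
Proof.
rewrite /escapeProb firstHit_step -{1}(jumpP_sum1 z) -sumR_minus.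
by apply: eq_bigr => z' _; case: (z' \in S); ring.
Qed.

(* Maximum principle: at a maximum, the one-step equation forces every neighbour
   to be a maximum too, and to lie outside [S] when the maximum is positive. *)
Lemma escapeProb_max_edge S v w :
  (forall y, escapeProb S y <= escapeProb S v) -> 0 < escapeProb S v ->
  v <> w -> 0 < Rt v w -> escapeProb S w = escapeProb S v /\ w \notin S.
Proof.
set M := escapeProb S v => v_max M_gt0 vw Rvw.
pose h z' := if z' \in S then 0 else escapeProb S z'.
have h_le z' : h z' <= M by rewrite /h; case: ifP => _; [lra | exact: v_max].
have jump_gt0 : 0 < jumpP Rt v w.
  by rewrite /jumpP; case: eqP => // _; apply: Rdiv_lt_0_compat => //; exact: holding_gt0.
have terms_ge0 z' : 0 <= jumpP Rt v z' * (M - h z').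
  by apply: Rmult_le_pos; [exact: jumpP_ge0 | have := h_le z'; lra].
have sum0 : \big[Rplus/0]_(z' : E) (jumpP Rt v z' * (M - h z')) = 0.
  under eq_bigr do rewrite Rmult_minus_distr_l.
  by rewrite sumR_minus -escapeProb_step -big_distrl /= jumpP_sum1 -/M; ring.
have /Rmult_integral [|] := sumR_eq0_nonneg w terms_ge0 sum0; first lra.
by rewrite /h; case: ifP => _ Mw; [lra | split => //; lra].
Qed.

Lemma firstHit_recurrent S : S != set0 -> forall z, firstHit Rt S S z = 1.
Proof.
move=> /set0Pn [s s_in]; have [u u_max] := finite_argmaxR (escapeProb S) s.
suff : escapeProb S u <= 0.
  move=> u_le0 z; have := u_max z; have := escapeProb_ge0 S z.
  by move: u_le0; rewrite /escapeProb; lra.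
apply: Rnot_lt_le => u_gt0.
have path_max v w : clos_refl_trans_1n E (fun a b => a <> b /\ 0 < Rt a b) v w ->
    escapeProb S v = escapeProb S u -> escapeProb S w = escapeProb S u /\ (v <> w -> w \notin S).
  elim=> [x|x y w' [xy Rxy] _ IH] x_max; first by split.
  have x_max' t : escapeProb S t <= escapeProb S x by rewrite x_max; exact: u_max.
  have [y_max y_S] := escapeProb_max_edge x_max' (ltac:(lra)) xy Rxy.
  have [w'_max w'_S] := IH (etrans y_max x_max); split => // _.
  by have [<-|yw'] := eqVneq y w'; [|exact/w'_S/eqP].
have [w wu] := other_state u.
have [v [uv Ruv]] := clos_rt_first_step (Rt_irr u w) (nesym wu).
have [v_max v_S] := escapeProb_max_edge u_max u_gt0 uv Ruv.
have [_ s_out] := path_max v s (clos_rt_rt1n _ _ _ _ (Rt_irr v s)) v_max.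
have vs : v <> s by move=> vs; rewrite vs s_in in v_S.
by rewrite (negbTE (s_out vs)) in s_in.
Qed.

Lemma jumpMeasure_firstHitUpToS S T k :
  \big[Rplus/0]_(z : E) (jumpMeasure z * firstHitUpTo Rt S T k.+1 z) =
  \big[Rplus/0]_(z' : E) (jumpMeasure z' * hitOrGoOn S T k z').
Proof.
under eq_bigr do rewrite firstHitUpToS big_distrr.
rewrite (exchange_big (Rplus : Monoid.com_law 0)) /=; apply: eq_bigr => z' _.
by rewrite -jumpMeasure_invariant big_distrl; apply: eq_bigr => z _ /=; ring.
Qed.

Lemma jumpMeasure_firstHitUpTo_le S A k : A \subset S ->
  \big[Rplus/0]_(z in S) (jumpMeasure z * firstHitUpTo Rt S A k z) <=
  \big[Rplus/0]_(z in A) jumpMeasure z.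
Proof.
move=> AS; case: k => [|k].
  by rewrite big1 => [|i _]; [apply: sumR_ge0 => i _; exact: jumpMeasure_ge0 | rewrite /=; ring].
have := jumpMeasure_firstHitUpToS S A k; set f := firstHitUpTo Rt S A k.+1.
rewrite (bigID (mem S)) [X in _ = X -> _](bigID (mem S)) /=.
have -> : \big[Rplus/0]_(i in S) (jumpMeasure i * hitOrGoOn S A k i) =
    \big[Rplus/0]_(z in A) jumpMeasure z.
  rewrite (bigID (mem A)) /= [X in _ + X]big1 => [|i /andP [i_S /negbTE i_A]]; last first.
    by rewrite /hitOrGoOn i_S i_A; ring.
  rewrite Rplus_0_r; apply: eq_big => [i|i /andP [i_S i_A]].
    by case i_A: (i \in A); rewrite ?andbT ?andbF ?(subsetP AS i i_A).
  by rewrite /hitOrGoOn i_S i_A; ring.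
have : \big[Rplus/0]_(i | i \notin S) (jumpMeasure i * hitOrGoOn S A k i) <=
    \big[Rplus/0]_(i | i \notin S) (jumpMeasure i * f i).
  apply: sumR_le => i /negbTE i_S; rewrite /hitOrGoOn i_S.
  by apply: Rmult_le_compat_l; [exact: jumpMeasure_ge0 | exact: firstHitUpTo_mono].
lra.
Qed.

Lemma jumpMeasure_firstHit_le S A : A \subset S ->
  \big[Rplus/0]_(z in S) (jumpMeasure z * firstHit Rt S A z) <=
  \big[Rplus/0]_(z in A) jumpMeasure z.
Proof.
move=> AS.
have flow_lim : is_lim_seq
    (fun k => \big[Rplus/0]_(z in S) (jumpMeasure z * firstHitUpTo Rt S A k z))
    (\big[Rplus/0]_(z in S) (jumpMeasure z * firstHit Rt S A z)).
  apply: is_lim_seq_sumR => z _; apply: is_lim_seq_mult'; first exact: is_lim_seq_const.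
  exact: (@firstHit_lim).
exact: is_lim_seq_le _ _ _ _ (fun k => jumpMeasure_firstHitUpTo_le k AS) flow_lim
  (is_lim_seq_const _).
Qed.

Lemma flow_in_le_flow_out S A : S != set0 -> A \subset S ->
  \big[Rplus/0]_(eta in S :\: A) (jumpMeasure eta * firstHit Rt S A eta) <=
  \big[Rplus/0]_(eta in A) (jumpMeasure eta * firstHit Rt S (S :\: A) eta).
Proof.
move=> S_neq0 AS; have SA : S :&: A = A by apply/setIidPr.
have hit_sum1 eta : firstHit Rt S A eta + firstHit Rt S (S :\: A) eta = 1.
  rewrite -(firstHit_recurrent S_neq0 eta) !(firstHit_split S _ eta).
  by rewrite [in RHS](big_setID A) SA.
have := jumpMeasure_firstHit_le AS; rewrite (big_setID A) /= SA.
suff -> : \big[Rplus/0]_(i in A) (jumpMeasure i * firstHit Rt S (S :\: A) i) =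
    \big[Rplus/0]_(i in A) jumpMeasure i -
    \big[Rplus/0]_(i in A) (jumpMeasure i * firstHit Rt S A i) by lra.
rewrite -sumR_minus; apply: eq_bigr => i _; have := hit_sum1 i => hit_i.
by rewrite (_ : firstHit Rt S (S :\: A) i = 1 - firstHit Rt S A i); [ring | lra].
Qed.

End JumpChain.

(** * Limits of block mass ratios *)

Lemma commClass_exit_edge p (r : 'I_p -> 'I_p -> R) (C K : {set 'I_p}) u v :
  commClass r C -> u \in C -> u \notin K -> v \in C -> v \in K ->
  exists a c, [/\ a \in C, a \notin K, c \in K, a <> c & 0 < r a c].
Proof.
move=> [x0 C_class] u_C u_K v_C v_K.
have ruv : reachP r u v.
  exact: rt_trans (proj2 (proj1 (C_class u) u_C)) (proj1 (proj1 (C_class v) v_C)).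
elim: (clos_rt_rt1n _ _ _ _ ruv) u_C u_K v_C v_K => {ruv u v} [u|u w v [uw ruw] wv IH].
  by move=> _ u_K _ u_K'; rewrite u_K' in u_K.
move=> u_C u_K v_C v_K.
have [w_K|w_K] := boolP (w \in K); first by exists u, w.
apply: (IH _ w_K v_C v_K); apply/C_class; split.
  exact: rt_trans (proj1 (proj1 (C_class u) u_C)) (rt_step _ _ _ _ (conj uw ruw)).
exact: rt_trans (clos_rt1n_rt _ _ _ _ wv) (proj2 (proj1 (C_class v) v_C)).
Qed.

Definition finiteb (l : Rbar) := if l is p_infty then false else true.

Section MassRatioLimits.
Variables (p : nat) (M : 'I_p -> nat -> R).
Hypothesis M_gt0 : forall x N, 0 < M x N.
Hypothesis ratio_ex_lim : forall x y, ex_lim_seq (fun N => M x N / M y N).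

Local Notation ratio x y := (fun N => M x N / M y N).

Definition ratioLim x y := Lim_seq (ratio x y).

Lemma ratioLim_lim x y : is_lim_seq (ratio x y) (ratioLim x y).
Proof. exact: Lim_seq_correct. Qed.

Lemma ratioLim_ge0 x y : Rbar_le 0 (ratioLim x y).
Proof. by apply: (is_lim_seq_ge0 _ (@ratioLim_lim x y)) => N; exact/Rlt_le/Rdiv_lt_0_compat. Qed.

Lemma ratioLim_id x : ratioLim x x = 1.
Proof.
apply: is_lim_seq_unique; apply: (is_lim_seq_ext (fun=> 1)); last exact: is_lim_seq_const.
by move=> N; have := M_gt0 x N => Mx; field; lra.
Qed.

Lemma ratioLim_finite x y : finiteb (ratioLim x y) -> exists2 a, ratioLim x y = Finite a & 0 <= a.
Proof. by have := ratioLim_ge0 x y; case: (ratioLim x y) => [a||] //= a_ge0 _; exists a. Qed.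

Lemma ratioLim_0_inv x y : ratioLim x y = 0 -> ratioLim y x = p_infty.
Proof.
move=> xy0; apply: is_lim_seq_unique; apply: (is_lim_seq_ext (fun N => / (M x N / M y N))).
  by move=> N; have := M_gt0 x N; have := M_gt0 y N => My Mx; field; lra.
by apply: is_lim_seq_inv_0; [move=> N; exact: Rdiv_lt_0_compat | rewrite -xy0; exact: ratioLim_lim].
Qed.

Lemma ratioLim_inf_inv x y : ratioLim x y = p_infty -> ratioLim y x = 0.
Proof.
move=> xy_inf; apply: is_lim_seq_unique; apply: (is_lim_seq_ext (fun N => / (M x N / M y N))).
  by move=> N; have := M_gt0 x N; have := M_gt0 y N => My Mx; field; lra.
by have := is_lim_seq_inv _ _ (@ratioLim_lim x y); rewrite xy_inf; apply.
Qed.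

Lemma ratioLim_mul0l x y z : ratioLim x y = 0 -> finiteb (ratioLim y z) -> ratioLim x z = 0.
Proof.
move=> xy0 /ratioLim_finite [a yz _]; apply: is_lim_seq_unique.
apply: (is_lim_seq_ext (fun N => M x N / M y N * (M y N / M z N))).
  by move=> N; have := M_gt0 y N; have := M_gt0 z N => Mz My; field; lra.
have -> : Finite 0 = Finite (0 * a) by rewrite Rmult_0_l.
by apply: is_lim_seq_mult'; [rewrite -xy0 | rewrite -yz]; exact: ratioLim_lim.
Qed.

Lemma ratioLim_mul0r x y z : finiteb (ratioLim x y) -> ratioLim y z = 0 -> ratioLim x z = 0.
Proof.
move=> /ratioLim_finite [a xy _] yz0; apply: is_lim_seq_unique.
apply: (is_lim_seq_ext (fun N => M x N / M y N * (M y N / M z N))).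
  by move=> N; have := M_gt0 y N; have := M_gt0 z N => Mz My; field; lra.
have -> : Finite 0 = Finite (a * 0) by rewrite Rmult_0_r.
by apply: is_lim_seq_mult'; [rewrite -xy | rewrite -yz0]; exact: ratioLim_lim.
Qed.

Lemma ratioLim_gt0 x y : finiteb (ratioLim x y) -> finiteb (ratioLim y x) ->
  exists2 a, ratioLim x y = Finite a & 0 < a.
Proof.
move=> /ratioLim_finite [a xy a_ge0] yx_fin; exists a => //.
case: (Rle_lt_or_eq_dec _ _ a_ge0) => // a0.
by move: yx_fin; rewrite ratioLim_0_inv // xy -a0.
Qed.

Lemma exists_lightest (s : seq 'I_p) : s != [::] ->
  exists2 x, x \in s & forall y, y \in s -> finiteb (ratioLim x y).
Proof.
elim: s => [//|a s IH] _; have [->|s_nil] := eqVneq s [::].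
  by exists a => [|y]; rewrite ?mem_head // inE => /eqP ->; rewrite ratioLim_id.
have [x x_s x_light] := IH s_nil.
case xa: (finiteb (ratioLim x a)).
  by exists x => [|y]; rewrite inE ?x_s ?orbT // => /orP [/eqP ->|/x_light].
have /ratioLim_inf_inv ax0 : ratioLim x a = p_infty by move: xa; case: (ratioLim x a).
exists a => [|y]; rewrite ?mem_head // inE => /orP [/eqP ->|/x_light y_fin].
  by rewrite ratioLim_id.
by rewrite (ratioLim_mul0l ax0 y_fin).
Qed.

Variables (rF : 'I_p -> 'I_p -> R) (q : 'I_p -> 'I_p -> nat -> R).
Hypothesis q_lim : forall x y, x != y -> is_lim_seq (q x y) (rF x y).
Hypothesis q_flow : forall (K : {set 'I_p}) a c, a \notin K -> c \in K -> forall N,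
  q a c N <= \big[Rplus/0]_(x in K) (M x N / M a N * \big[Rplus/0]_(y | y \notin K) q x y N).

Lemma ratioLim_finite_in_class C : commClass rF C ->
  forall x y, x \in C -> y \in C -> finiteb (ratioLim x y).
Proof.
move=> C_class x1 y1 x1_C y1_C; apply/negPn/negP => x1y1_inf.
pose K := [set x in C | [forall (y | y \in C), finiteb (ratioLim x y)]].
have [xm xm_C xm_light] :
    exists2 x, x \in enum C & forall y, y \in enum C -> finiteb (ratioLim x y).
  by apply: exists_lightest; apply/eqP => C0; move: x1_C; rewrite -mem_enum C0.
rewrite mem_enum in xm_C.
have xm_K : xm \in K.
  by rewrite inE xm_C; apply/forall_inP => y y_C; apply: xm_light; rewrite mem_enum.
have x1_K : x1 \notin K.
  by rewrite inE x1_C; apply/forall_inP => /(_ y1 y1_C); rewrite (negbTE x1y1_inf).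
have [a [c [a_C a_K c_K ac rac]]] := commClass_exit_edge C_class x1_C x1_K xm_C xm_K.
have K_light_a x : x \in K -> ratioLim x a = 0.
  move: a_K; rewrite !inE a_C => /forall_inPn [y y_C ay_fin] /andP [_ /forall_inP x_fin].
  apply: ratioLim_mul0r (x_fin y y_C) (ratioLim_inf_inv _).
  by move: ay_fin; case: (ratioLim a y).
have : Rbar_le (rF a c) (\big[Rplus/0]_(x in K) (0 * \big[Rplus/0]_(y | y \notin K) rF x y)).
  apply: (is_lim_seq_le _ _ _ _ (q_flow a_K c_K)); first by apply: q_lim; exact/eqP.
  apply: is_lim_seq_sumR => x x_K; apply: is_lim_seq_mult'.
    by rewrite -(K_light_a x x_K); exact: ratioLim_lim.
  by apply: is_lim_seq_sumR => y y_K; apply: q_lim; apply: contraNneq y_K => <-.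
by rewrite big1 /= => [|x _]; [lra | ring].
Qed.

End MassRatioLimits.

(** * Flow between blocks *)

Lemma muS_gt0 (E : finType) (m : E -> R) (U : {set E}) :
  (forall eta, 0 < m eta) -> U != set0 -> 0 < muS m U.
Proof.
move=> m_gt0 /set0Pn [x x_U]; rewrite /muS (bigD1 x) //=.
have : 0 <= \big[Rplus/0]_(i in U | i != x) m i by apply: sumR_ge0 => i _; exact/Rlt_le.
by have := m_gt0 x; lra.
Qed.

Section BlockFlow.
Variables (E : finType) (Rt : E -> E -> R) (m : E -> R).
Hypothesis Rt_ge0 : forall a b, a <> b -> 0 <= Rt a b.
Hypothesis Rt_irr : irreducible Rt.
Hypothesis m_inv : invariantProb Rt m.
Hypothesis two_states : exists a b : E, a <> b.
Hypothesis m_gt0 : forall eta, 0 < m eta.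
Variables (p : nat) (F : 'I_p -> {set E}).
Hypothesis F_disj : forall x y, x != y -> [disjoint F x & F y].

Local Notation G := (unionF F).

Definition flow (U V : {set E}) :=
  \big[Rplus/0]_(eta in U) (jumpMeasure Rt m eta * firstHit Rt G V eta).

Lemma flow_le_subset (U U' V : {set E}) : U \subset U' -> flow U V <= flow U' V.
Proof.
move=> UU'; apply: sumR_le_subset => [eta _|eta]; last exact: (subsetP UU').
by apply: Rmult_le_pos; [exact: jumpMeasure_ge0 | exact: firstHit_ge0].
Qed.

Lemma traceSetRate_flow x y : F x != set0 ->
  muS m (F x) * traceSetRate Rt m G (F x) (F y) = flow (F x) (F y).
Proof.
move=> Fx_neq0; have := muS_gt0 m_gt0 Fx_neq0 => mFx.
rewrite /traceSetRate -Rmult_assoc Rinv_r ?Rmult_1_l; last lra.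
apply: eq_bigr => eta _; rewrite /traceRate -big_distrr /=.
rewrite (firstHit_split Rt_ge0 Rt_irr two_states G (F y)).
by rewrite /jumpMeasure; ring.
Qed.

Lemma block_flow (K : {set 'I_p}) a c : G != set0 -> a \notin K -> c \in K ->
  flow (F a) (F c) <= \big[Rplus/0]_(x in K) \big[Rplus/0]_(y | y \notin K) flow (F x) (F y).
Proof.
move=> G_neq0 a_K c_K; set A := \bigcup_(x in K) F x.
have AG : A \subset G by apply/subsetP => eta /bigcupP [x _ eta_x]; apply/bigcupP; exists x.
have flow_ge0 eta V : 0 <= jumpMeasure Rt m eta * firstHit Rt G V eta.
  by apply: Rmult_le_pos; [exact: jumpMeasure_ge0 | exact: firstHit_ge0].
have into_A : flow (F a) (F c) <= flow (F a) A.
  apply: sumR_le => eta _; apply: Rmult_le_compat_l; first exact: jumpMeasure_ge0.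
  apply: (firstHit_le_subset Rt_ge0 Rt_irr two_states).
  by apply/subsetP => xi xi_c; apply/bigcupP; exists c.
have from_outside : flow (F a) A <= flow (G :\: A) A.
  apply: flow_le_subset; apply/subsetP => eta eta_a; rewrite in_setD; apply/andP; split.
    apply/bigcupP => -[x x_K eta_x]; have ax : a != x by apply: contraNneq a_K => ->.
    by rewrite (disjointFr (F_disj ax) eta_a) in eta_x.
  by apply/bigcupP; exists a.
have balance : flow (G :\: A) A <= flow A (G :\: A).
  rewrite /flow; exact: (flow_in_le_flow_out Rt_ge0 Rt_irr m_inv two_states G_neq0 AG).
have out_blocks : flow A (G :\: A) <= \big[Rplus/0]_(x in K) flow (F x) (G :\: A).
  by apply: sumR_le_cover => [eta|eta /bigcupP [x x_K eta_x]]; [exact: flow_ge0 | exists x].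
have to_blocks x : flow (F x) (G :\: A) <= \big[Rplus/0]_(y | y \notin K) flow (F x) (F y).
  rewrite /flow (exchange_big (Rplus : Monoid.com_law 0)) /=.
  under [X in _ <= X]eq_bigr do rewrite -big_distrr.
  apply: sumR_le => eta _; apply: Rmult_le_compat_l; first exact: jumpMeasure_ge0.
  apply: (firstHit_le_cover Rt_ge0 Rt_irr two_states) => xi.
  rewrite in_setD => /andP [xi_A /bigcupP [y _ xi_y]].
  by exists y => //; apply: contra xi_A => y_K; apply/bigcupP; exists y.
suff : \big[Rplus/0]_(x in K) flow (F x) (G :\: A) <=
    \big[Rplus/0]_(x in K) \big[Rplus/0]_(y | y \notin K) flow (F x) (F y) by lra.
by apply: sumR_le => x _; exact: to_blocks.
Qed.

Lemma traceSetRate_block_flow (K : {set 'I_p}) a c s :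
  (forall x, F x != set0) -> 0 <= s -> a \notin K -> c \in K ->
  s * traceSetRate Rt m G (F a) (F c) <= \big[Rplus/0]_(x in K)
    (muS m (F x) / muS m (F a) *
     \big[Rplus/0]_(y | y \notin K) (s * traceSetRate Rt m G (F x) (F y))).
Proof.
move=> F_neq0 s_ge0 a_K c_K; have mFa := muS_gt0 m_gt0 (F_neq0 a).
have G_neq0 : G != set0.
  by have /set0Pn [eta eta_a] := F_neq0 a; apply/set0Pn; exists eta; apply/bigcupP; exists a.
have := block_flow G_neq0 a_K c_K; rewrite -!traceSetRate_flow //.
under [X in _ <= X -> _]eq_bigr do under eq_bigr do rewrite -traceSetRate_flow //.
move=> flow_le.
have -> : s * traceSetRate Rt m G (F a) (F c) =
    s / muS m (F a) * (muS m (F a) * traceSetRate Rt m G (F a) (F c)) by field; lra.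
rewrite (eq_bigr (fun x => s / muS m (F a) * \big[Rplus/0]_(y | y \notin K)
    (muS m (F x) * traceSetRate Rt m G (F x) (F y)))) => [|x _]; last first.
  by rewrite !big_distrr; apply: eq_bigr => y _ /=; field; lra.
rewrite -big_distrr /=; apply: Rmult_le_compat_l => //.
by apply: Rmult_le_pos => //; exact/Rlt_le/Rinv_0_lt_compat.
Qed.

End BlockFlow.

Lemma partition_two_states (E : finType) p (F : 'I_p -> {set E}) (D : {set E}) :
  (2 <= p)%N -> isPartition F D -> exists a b : E, a <> b.
Proof.
move=> p2 [F_neq0 [F_disj _]]; pose x0 : 'I_p := Ordinal (ltnW p2); pose x1 : 'I_p := Ordinal p2.
have /set0Pn [a a_x0] := F_neq0 x0; have /set0Pn [b b_x1] := F_neq0 x1.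
by exists a, b => ab; rewrite -ab (disjointFr (F_disj x0 x1 isT) a_x0) in b_x1.
Qed.

Section Blocks.
Variables (E : finType) (Rs : nat -> E -> E -> R) (mu : nat -> E -> R) (B : {set E * E})
  (p : nat) (F : 'I_p -> {set E}) (D : {set E}) (b : nat -> R) (rF : 'I_p -> 'I_p -> R).
Hypothesis hirr : forall N, irreducible (Rs N).
Hypothesis hmu : forall N, invariantProb (Rs N) (mu N).
Hypothesis hA : assumptionA Rs B.
Hypothesis hp : (2 <= p)%N.
Hypothesis hpart : isPartition F D.
Hypothesis hb : forall N, 0 < b N.
Hypothesis hH0 : H0 mu F.
Hypothesis hH1 : H1 Rs mu F b rF.

Definition blockMass x N := muS (mu N) (F x).

Lemma blockMass_gt0 x N : 0 < blockMass x N.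
Proof.
have [hAi _] := hA; have [F_neq0 _] := hpart.
exact: muS_gt0 (mu_gt0 hAi hirr hmu N) (F_neq0 x).
Qed.

Lemma blockRatio_ex_lim x y : ex_lim_seq (fun N => blockMass x N / blockMass y N).
Proof.
have [hAi [hB hAii]] := hA; have [F_neq0 [F_disj _]] := hpart.
have mu_pos := mu_gt0 hAi hirr hmu.
have [ex ex_x] := set0Pn _ (F_neq0 x); have [ey ey_y] := set0Pn _ (F_neq0 y).
have [lx [[lx_gt0 _] /is_lim_seq_Reals Hlx]] := hH0 ex_x.
have [ly [[ly_gt0 _] /is_lim_seq_Reals Hly]] := hH0 ey_y.
have [<-|xy] := eqVneq x y.
  exists 1; apply: (is_lim_seq_ext (fun=> 1)); last exact: is_lim_seq_const.
  by move=> N; have := blockMass_gt0 x N => h; field; lra.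
have ex_ey : ex <> ey by move=> exy; rewrite exy (disjointFl (F_disj _ _ xy) ey_y) in ex_x.
have [L0 HL0] := mu_ratio_ex_lim hAi hB hAii hirr hmu ex_ey.
exists (Rbar_mult L0 (ly / lx)).
apply: (is_lim_seq_ext (fun N => mu N ex / mu N ey *
    ((mu N ey / blockMass y N) / (mu N ex / blockMass x N)))).
  move=> N; have := mu_pos N ex; have := mu_pos N ey.
  by have := blockMass_gt0 x N; have := blockMass_gt0 y N => h1 h2 h3 h4; field; lra.
apply: (is_lim_seq_mult _ _ _ _ _ HL0); first exact: is_lim_seq_div' Hly Hlx ltac:(lra).
apply: Rbar_mult_correct; have : ly / lx <> 0 by apply: Rgt_not_eq; exact: Rdiv_lt_0_compat.
by case: L0 {HL0}.
Qed.

Lemma blockRatio_finite_in_class C : commClass rF C ->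
  forall x y, x \in C -> y \in C -> finiteb (ratioLim blockMass x y).
Proof.
have [hAi _] := hA; have [F_neq0 [F_disj _]] := hpart.
pose q x y N := b N * traceSetRate (Rs N) (mu N) (unionF F) (F x) (F y).
apply: (ratioLim_finite_in_class blockMass_gt0 blockRatio_ex_lim (q := q)).
  by move=> x y xy; apply/is_lim_seq_Reals; exact: (proj2 (proj1 hH1 x y xy)).
move=> K a c a_K c_K N.
exact: (traceSetRate_block_flow (rate_ge0 hAi N) (hirr N) (hmu N)
  (partition_two_states hp hpart) (mu_gt0 hAi hirr hmu N) F_disj F_neq0 (Rlt_le _ _ (hb N))
  a_K c_K).
Qed.

End Blocks.

Theorem mainTheorem18
  (E : finType) (Rs : nat -> E -> E -> R) (mu : nat -> E -> R) (B : {set E * E})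
  (p : nat) (F : 'I_p -> {set E}) (D : {set E})
  (bm b : nat -> R) (rF : 'I_p -> 'I_p -> R) (C : {set 'I_p})
  (hirr : forall N, irreducible (Rs N))
  (hmu : forall N, invariantProb (Rs N) (mu N))
  (hA : assumptionA Rs B)
  (hp : (2 <= p)%N)
  (hpart : isPartition F D)
  (hbm : forall N, (0 < bm N)) (hb : forall N, (0 < b N))
  (hratio : Un_cv (fun N => (bm N / b N)) 0)
  (hH0 : H0 mu F)
  (hH1 : H1 Rs mu F b rF)
  (hH2 : H2 Rs mu F bm)
  (hH3 : H3 Rs D b)
  (hC : commClass rF C) :
  forall eta xi : E,
    eta \in \bigcup_(x in C) F x -> xi \in \bigcup_(x in C) F x -> eta != xi ->
    exists m : R, (0 < m) /\ Un_cv (fun N => (mu N eta / mu N xi)) m.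
Proof.
move=> eta xi /bigcupP [x x_C eta_x] /bigcupP [y y_C xi_y] _.
have [hAi _] := hA.
have M_gt0 := blockMass_gt0 hirr hmu hA hpart.
have M_lim := blockRatio_ex_lim hirr hmu hA hpart hH0.
have C_finite := blockRatio_finite_in_class hirr hmu hA hp hpart hb hH0 hH1 hC.
have [a xy a_gt0] := ratioLim_gt0 M_gt0 M_lim (C_finite x y x_C y_C) (C_finite y x y_C x_C).
have [l1 [[l1_gt0 _] /is_lim_seq_Reals eta_lim]] := hH0 _ _ eta_x.
have [l2 [[l2_gt0 _] /is_lim_seq_Reals xi_lim]] := hH0 _ _ xi_y.
exists (l1 * a / l2); split; first by apply: Rdiv_lt_0_compat => //; exact: Rmult_lt_0_compat.
apply/is_lim_seq_Reals.
apply: (is_lim_seq_ratio_via (mu_gt0 hAi hirr hmu ^~ xi) (M_gt0 x) (M_gt0 y) _ eta_lim xi_lim).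
  exact: Rgt_not_eq.
by rewrite -xy; exact: (ratioLim_lim M_lim).
Qed.
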